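(* Let $q\in(0,1]$. Consider the parametric convex semi-infinite problem described in the context, let $((\bar c,\bar b),\bar x)\in\operatorname{gph}\mathcal{S}$, and assume that $\mathcal{L}$ is not $q$-order calm at $((f(\bar x)+\langle\bar c,\bar x\rangle,\bar b),\bar x)\in\operatorname{gph}\mathcal{L}$. Then there exist a sequence $(x^r)_{r\in\mathbb{N}}$ in $\mathbb{R}^n$ converging to $\bar x$ with $\bar f(x^r)>0$ and $\bar f(x^r)\downarrow0$, and a sequence $(v^r)_{r\in\mathbb{N}}$ with $v^r\in\partial\bar f(x^r)\setminus\{0_n\}$, such that $v^r\to0_n$ and $$d(x^r,\mathcal{S}(\bar c,\bar b))\ge\frac{\bar f(x^r)}{\|v^r\|}\quad\text{for all } r.$$
   Context: Setting: $T$ is a compact subset of a metric space $Z$ with $T\neq Z$; $f:\mathbb{R}^n\to\mathbb{R}$ and $g_t:\mathbb{R}^n\to\mathbb{R}$ ($t\in T$) are convex, with $(t,x)\mapsto g_t(x)$ continuous on $T\times\mathbb{R}^n$. $\mathcal{C}(T,\mathbb{R})$ is the space of continuous $b:T\to\mathbb{R}$, $t\mapsto b_t$, with $\|b\|_\infty=\max_t|b_t|$. For $(c,b)\in\mathbb{R}^n\times\mathcal{C}(T,\mathbb{R})$, $P(c,b)$: minimize $f(x)+\langle c,x\rangle$ subject to $g_t(x)\le b_t$, $t\in T$; $\mathcal{S}(c,b)$ is its optimal solution set. $\mathcal{L}(\alpha,b)=\{x: f(x)+\langle\bar c,x\rangle\le\alpha,\ g_t(x)\le b_t,\ t\in T\}$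 on $\mathbb{R}\times\mathcal{C}(T,\mathbb{R})$ normed by $\max\{|\alpha|,\|b\|_\infty\}$. $\bar f(x):=\sup\{f(x)-f(\bar x)+\langle\bar c,x-\bar x\rangle;\ g_t(x)-\bar b_t,\ t\in T\}$. $\partial$ is the convex subdifferential; $\|\cdot\|$ Euclidean. A set-valued $S:Y\rightrightarrows X$ between metric spaces is $q$-order calm at $(\bar y,\bar x)\in\operatorname{gph}S$ if there exist $\tau>0$ and neighbourhoods $U$ of $\bar x$, $V$ of $\bar y$ with $\tau\,d(x,S(\bar y))\le d(y,\bar y)^q$ for all $y\in V$, $x\in S(y)\cap U$. *)

From HB Require Import structures.
From mathcomp Require Import all_boot all_order all_algebra.
From mathcomp Require Import all_classical all_reals all_analysis.
Set Implicit Arguments. Unset Strict Implicit. Unset Printing Implicit Defensive.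
Import Order.TTheory GRing.Theory Num.Theory.
Import numFieldNormedType.Exports.
Local Open Scope classical_set_scope.
Local Open Scope ring_scope.

Section Defs.
Variables (R : realType) (n : nat).

Definition dotp (x y : 'rV[R]_n) : R := \sum_(i < n) x 0 i * y 0 i.
Definition enorm (x : 'rV[R]_n) : R := Num.sqrt (dotp x x).

Definition dist_set (x : 'rV[R]_n) (S : set 'rV[R]_n) : R :=
  inf [set enorm (x - s) | s in S].

Definition convex_fun (h : 'rV[R]_n -> R) : Prop :=
  forall (x y : 'rV[R]_n) (l : R), 0 <= l -> l <= 1 ->
    h (l *: x + (1 - l) *: y) <= l * h x + (1 - l) * h y.

Definition subdiff (h : 'rV[R]_n -> R) (x : 'rV[R]_n) : set 'rV[R]_n :=
  [set v | forall y, h x + dotp v (y - x) <= h y].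

(* sup norm on C(T,R), for b represented as a function Z -> R continuous on T *)
Definition supnorm {Z : Type} (T : set Z) (b : Z -> R) : R :=
  sup [set `|b t| | t in T].

Variables (Z : pseudoMetricType R) (T : set Z)
  (f : 'rV[R]_n -> R) (g : Z -> 'rV[R]_n -> R).

Definition feasible (b : Z -> R) : set 'rV[R]_n :=
  [set x | forall t, T t -> g t x <= b t].

Definition optset (c : 'rV[R]_n) (b : Z -> R) : set 'rV[R]_n :=
  [set x | feasible b x /\
           forall y, feasible b y -> f x + dotp c x <= f y + dotp c y].

Definition levelset (cbar : 'rV[R]_n) (alpha : R) (b : Z -> R) : set 'rV[R]_n :=
  [set x | f x + dotp cbar x <= alpha /\ feasible b x].

Definition fbar (cbar xbar : 'rV[R]_n) (bbar : Z -> R) (x : 'rV[R]_n) : R :=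
  sup ([set f x - f xbar + dotp cbar (x - xbar)] `|`
       [set g t x - bbar t | t in T]).

(* q-order calmness of L at ((alphabar, bbar), xbar), with metric balls as
   neighbourhoods; the parameter space R x C(T,R) carries the metric
   max(|alpha - alpha'|, ||b - b'||_oo). *)
Definition L_qcalm (cbar : 'rV[R]_n) (q : R) (alphabar : R) (bbar : Z -> R)
    (xbar : 'rV[R]_n) : Prop :=
  exists tau : R, 0 < tau /\
  exists eps : R, 0 < eps /\
  exists del : R, 0 < del /\
  forall (alpha : R) (b : Z -> R), {within T, continuous b} ->
    Num.max `|alpha - alphabar| (supnorm T (b \- bbar)) < del ->
    forall x, levelset cbar alpha b x -> enorm (x - xbar) < eps ->
      tau * dist_set x (levelset cbar alphabar bbar)
        <= (Num.max `|alpha - alphabar| (supnorm T (b \- bbar))) `^ q.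

End Defs.

(* Write h for fbar.  It is convex, nonnegative because xbar is optimal, and its
   zero set is the level set L(abar, bbar), which contains S(cbar, bbar).  Testing
   q-order calmness with tau = eps on the eps-ball shows that its failure yields
   points x near xbar with h x <= max(|alpha - abar|, |b - bbar|) <= (...)^q
   < eps d(x, L).  A proximal step y = argmin (h + |. - x|^2 / (2 lam)) with
   lam = d(x, L)^2 / (4 h x) stays outside L, and v = (x - y) / lam is a nonzero
   subgradient of h at y with |v| <= 4 h x / d(x, L) < 4 eps.  Taking eps = 1/(k+1)
   and the next threshold below h y builds the sequences, and for s in S(cbar, bbar)
   the subgradient inequality gives h y <= <v, y - s> <= |v| |y - s|.  The proximal
   point exists because a finite convex function on R^n has subgradients (extend a
   linear minorant one coordinate at a time), hence is lower semicontinuous, hence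
   attains its minimum on compact boxes. *)

From mathcomp Require Import all_boot all_order all_algebra.
From mathcomp Require Import all_classical all_reals all_analysis.
From mathcomp Require Import ring lra.
Import Order.TTheory GRing.Theory Num.Theory.
Import numFieldNormedType.Exports.
Local Open Scope classical_set_scope.
Local Open Scope ring_scope.

Section Euclidean.
Context {R : realType} {n : nat}.
Implicit Types (x y z : 'rV[R]_n) (S : set 'rV[R]_n).

Lemma dotpC x y : dotp x y = dotp y x.
Proof. by apply: eq_bigr => i _; rewrite mulrC. Qed.

Lemma dotpDr x y z : dotp x (y + z) = dotp x y + dotp x z.
Proof. by rewrite /dotp -big_split; apply: eq_bigr => i _; rewrite mxE mulrDr. Qed.

Lemma dotpDl x y z : dotp (x + y) z = dotp x z + dotp y z.
Proof. by rewrite dotpC dotpDr !(dotpC z). Qed.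

Lemma dotpZr a x y : dotp x (a *: y) = a * dotp x y.
Proof. by rewrite /dotp mulr_sumr; apply: eq_bigr => i _; rewrite mxE mulrCA. Qed.

Lemma dotpZl a x y : dotp (a *: x) y = a * dotp x y.
Proof. by rewrite dotpC dotpZr dotpC. Qed.

Lemma dotpNr x y : dotp x (- y) = - dotp x y.
Proof. by rewrite -scaleN1r dotpZr mulN1r. Qed.

Lemma dotpNl x y : dotp (- x) y = - dotp x y.
Proof. by rewrite dotpC dotpNr dotpC. Qed.

Lemma dotpBr x y z : dotp x (y - z) = dotp x y - dotp x z.
Proof. by rewrite dotpDr dotpNr. Qed.

Lemma dotp0r x : dotp x 0 = 0.
Proof. by rewrite -(scale0r 0) dotpZr mul0r. Qed.

Lemma dotp0l x : dotp 0 x = 0.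
Proof. by rewrite dotpC dotp0r. Qed.

Lemma dotp_deltar x j : dotp x (delta_mx 0 j) = x 0 j.
Proof.
rewrite /dotp (bigD1 j) //= big1 => [|i /negPf ij]; rewrite mxE ?eqxx ?ij /=.
  by rewrite mulr1 addr0.
by rewrite mulr0.
Qed.

Lemma dotpp_ge0 x : 0 <= dotp x x.
Proof. by apply: sumr_ge0 => i _; rewrite -expr2 sqr_ge0. Qed.

Lemma dotpp_ge_coord x i : x 0 i ^+ 2 <= dotp x x.
Proof.
rewrite /dotp (bigD1 i) //= expr2 lerDl; apply: sumr_ge0 => j _.
by rewrite -expr2 sqr_ge0.
Qed.

Lemma dotpp_eq0 x : (dotp x x == 0) = (x == 0).
Proof.
apply/idP/eqP => [|->]; last by rewrite dotp0r.
move=> /eqP/psumr_eq0P x0; apply/rowP => i; rewrite mxE.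
have /eqP : x 0 i * x 0 i = 0 by apply: x0 => // j _; rewrite -expr2 sqr_ge0.
by rewrite mulf_eq0 orbb => /eqP.
Qed.

Lemma dotp_expand x y t :
  dotp (x + t *: y) (x + t *: y) = dotp x x + 2 * t * dotp x y + t ^+ 2 * dotp y y.
Proof. by rewrite !dotpDl !dotpDr !dotpZl !dotpZr (dotpC y x); ring. Qed.

Lemma dotp_sqr_le x y : dotp x y ^+ 2 <= dotp x x * dotp y y.
Proof.
have [->|y0] := eqVneq y 0; first by rewrite !dotp0r expr0n mulr0.
have B_gt0 : 0 < dotp y y by rewrite lt_neqAle eq_sym dotpp_eq0 y0 dotpp_ge0.
set A := dotp x x; set B := dotp y y; set C := dotp x y in B_gt0 *.
have := dotpp_ge0 (B *: x - C *: y).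
rewrite -scaleNr dotp_expand !dotpZl !dotpZr -/A -/B -/C.
have -> : B * (B * A) + 2 * - C * (B * C) + (- C) ^+ 2 * B = B * (A * B - C ^+ 2) by ring.
by rewrite pmulr_rge0 // subr_ge0.
Qed.

Lemma enorm_ge0 x : 0 <= enorm x.
Proof. exact: sqrtr_ge0. Qed.

Lemma enorm_sqr x : enorm x ^+ 2 = dotp x x.
Proof. by rewrite sqr_sqrtr // dotpp_ge0. Qed.

Lemma enorm0 : enorm (0 : 'rV[R]_n) = 0.
Proof. by rewrite /enorm dotp0r sqrtr0. Qed.

Lemma enorm_gt0 x : (0 < enorm x) = (x != 0).
Proof. by rewrite sqrtr_gt0 lt_neqAle dotpp_ge0 andbT eq_sym dotpp_eq0. Qed.

Lemma enormZ a x : enorm (a *: x) = `|a| * enorm x.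
Proof. by rewrite /enorm dotpZl dotpZr mulrA -expr2 sqrtrM ?sqr_ge0 // sqrtr_sqr. Qed.

Lemma enormB x y : enorm (x - y) = enorm (y - x).
Proof. by rewrite -opprB -scaleN1r enormZ normrN1 mul1r. Qed.

Lemma enorm_le_sqr x c : 0 <= c -> dotp x x <= c ^+ 2 -> enorm x <= c.
Proof. by move=> c0 xc; rewrite -(ler_pXn2r (_ : 0 < 2)%N) ?nnegrE ?enorm_ge0 ?enorm_sqr. Qed.

Lemma cauchy_schwarz x y : dotp x y <= enorm x * enorm y.
Proof.
apply: le_trans (ler_norm _) _; rewrite /enorm -sqrtrM ?dotpp_ge0 //.
by rewrite -sqrtr_sqr ler_sqrt ?dotp_sqr_le // mulr_ge0 ?dotpp_ge0.
Qed.

Lemma ler_enormD x y : enorm (x + y) <= enorm x + enorm y.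
Proof.
apply: enorm_le_sqr; first by rewrite addr_ge0 ?enorm_ge0.
have := dotp_expand x y 1; rewrite scale1r => ->.
have := cauchy_schwarz x y; rewrite -!enorm_sqr; nra.
Qed.

Lemma norm_dotp_le (v u : 'rV[R]_n) d : (forall i, `|u 0 i| <= d) ->
  `|dotp v u| <= (\sum_i `|v 0 i|) * d.
Proof.
move=> u_d; rewrite mulr_suml; apply: le_trans (ler_norm_sum _ _ _) _.
by apply: ler_sum => i _; rewrite normrM ler_wpM2l.
Qed.

Lemma dist_set_le x S s : S s -> dist_set x S <= enorm (x - s).
Proof.
move=> Ss; apply: ge_inf; last by exists s.
by exists 0 => r [s' _ <-]; exact: enorm_ge0.
Qed.

Lemma dist_set_glb x S c : S !=set0 ->
  (forall s, S s -> c <= enorm (x - s)) -> c <= dist_set x S.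
Proof.
move=> [s Ss] xS; apply: lb_le_inf; first by exists (enorm (x - s)), s.
by move=> r [s' Ss' <-]; exact: xS.
Qed.

End Euclidean.

Section Subgradient.
Context {R : realType} {n : nat}.

Section MinorantExtension.
Variables (gg : 'rV[R]_n -> R) (V : set 'rV[R]_n) (v e : 'rV[R]_n).
Hypothesis gg_convex : convex_fun gg.
Hypothesis V_convex : forall u1 u2 l, V u1 -> V u2 -> 0 <= l -> l <= 1 ->
  V (l *: u1 + (1 - l) *: u2).
Hypothesis v_minorant : forall u, V u -> dotp v u <= gg u.

Lemma minorant_slope_le u1 u2 s t : V u1 -> V u2 -> 0 < s -> 0 < t ->
  (dotp v u1 - gg (u1 - t *: e)) / t <= (gg (u2 + s *: e) - dotp v u2) / s.
Proof.
move=> Vu1 Vu2 s0 t0; have st0 : 0 < s + t by rewrite addr_gt0.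
pose l := s / (s + t).
have l1 : 1 - l = t / (s + t) by rewrite /l; field; rewrite gt_eqF.
have l0 : 0 <= l by rewrite divr_ge0 // ltW.
have l_le1 : l <= 1 by rewrite ler_pdivrMr // mul1r lerDl ltW.
have mid : l *: (u1 - t *: e) + (1 - l) *: (u2 + s *: e) = l *: u1 + (1 - l) *: u2.
  by apply/rowP => i; rewrite !mxE l1 /l; field; rewrite gt_eqF.
have := gg_convex (u1 - t *: e) (u2 + s *: e) l l0 l_le1; rewrite mid.
have := v_minorant _ (V_convex _ _ _ Vu1 Vu2 l0 l_le1); rewrite dotpDr !dotpZr.
move=> /le_trans/[apply]; rewrite l1 /l.
have E a b : s / (s + t) * a + t / (s + t) * b = (s * a + t * b) / (s + t).
  by field; rewrite gt_eqF.
rewrite !E ler_pM2r ?invr_gt0 // => H.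
rewrite ler_pdivrMr // mulrAC ler_pdivlMr //; nra.
Qed.

Hypothesis V_neq0 : V !=set0.

Lemma minorant_extend : exists c : R,
  forall u s, V u -> dotp v u + c * s <= gg (u + s *: e).
Proof.
(* Any c between the left slopes (the set A) and the right slopes of gg along e works. *)
have [u0 Vu0] := V_neq0.
pose A := [set (dotp v u - gg (u - t *: e)) / t | u in V & t in [set t | 0 < t]].
have A_ub u s : V u -> 0 < s -> ubound A ((gg (u + s *: e) - dotp v u) / s).
  by move=> Vu s0 r [u1 Vu1 [t t0 <-]]; exact: minorant_slope_le.
have A_sup : has_sup A.
  split; first by exists ((dotp v u0 - gg (u0 - 1 *: e)) / 1), u0 => //; exists 1 => //=.
  by exists ((gg (u0 + 1 *: e) - dotp v u0) / 1); apply: A_ub.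
exists (sup A) => u s Vu.
have [s0|s0|->] := ltgtP s 0; last by rewrite mulr0 addr0 scale0r addr0; exact: v_minorant.
- have As : A ((dotp v u - gg (u - (- s) *: e)) / (- s)).
    by exists u => //; exists (- s) => //=; rewrite oppr_gt0.
  have := ub_le_sup A_sup.2 As.
  rewrite scaleNr opprK ler_pdivrMr ?oppr_gt0 //; nra.
- have := ge_sup A_sup.1 (A_ub u s Vu s0).
  rewrite ler_pdivlMr //; nra.
Qed.

End MinorantExtension.

Definition vanishes_from (k : nat) (u : 'rV[R]_n) :=
  forall i : 'I_n, (k <= i)%N -> u 0 i = 0.

Lemma vanishes_from_minorant (gg : 'rV[R]_n -> R) k : convex_fun gg -> 0 <= gg 0 ->
  (k <= n)%N -> exists2 v, vanishes_from k v &
    forall u, vanishes_from k u -> dotp v u <= gg u.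
Proof.
move=> gg_convex gg0; elim: k => [_|k IH kn].
  exists 0 => [i _|u u0]; first by rewrite mxE.
  have -> : u = 0 by apply/rowP => i; rewrite mxE u0.
  by rewrite dotp0r.
have [v v_k v_minorant] := IH (ltnW kn).
pose e : 'rV[R]_n := delta_mx 0 (Ordinal kn).
have Vk_convex u1 u2 l : vanishes_from k u1 -> vanishes_from k u2 -> 0 <= l -> l <= 1 ->
    vanishes_from k (l *: u1 + (1 - l) *: u2).
  by move=> V1 V2 _ _ i ki; rewrite !mxE V1 // V2 // !mulr0 addr0.
have Vk_neq0 : vanishes_from k !=set0 by exists 0 => i _; rewrite mxE.
have [c Hc] := minorant_extend gg (vanishes_from k) v e gg_convex Vk_convex v_minorant Vk_neq0.
exists (v + c *: e) => [i ki|u u_k1].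
  by rewrite !mxE v_k ?(ltnW ki) // eqxx -val_eqE /= (gtn_eqF ki) mulr0 addr0.
pose s := u 0 (Ordinal kn); pose u' := u - s *: e.
have u'_k : vanishes_from k u'.
  move=> i ki; rewrite !mxE eqxx /=.
  have [->|ik] := eqVneq i (Ordinal kn); first by rewrite mulr1 subrr.
  rewrite mulr0 subr0 u_k1 // ltn_neqAle ki andbT.
  by apply: contra ik => /eqP ki'; apply/eqP/val_inj; rewrite /= ki'.
have -> : u = u' + s *: e by rewrite subrK.
clearbody s u'; rewrite dotpDl !dotpDr !dotpZl !dotpZr !dotp_deltar (dotpC e) dotp_deltar.
by rewrite v_k // u'_k // mxE !eqxx !mulr0 mulr1 !addr0 add0r; apply: Hc.
Qed.

Lemma subdiff_neq0 (h : 'rV[R]_n -> R) x : convex_fun h -> subdiff h x !=set0.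
Proof.
move=> h_convex; pose gg u := h (x + u) - h x.
have gg_convex : convex_fun gg.
  move=> a b l l0 l1; have := h_convex (x + a) (x + b) l l0 l1.
  have -> : l *: (x + a) + (1 - l) *: (x + b) = x + (l *: a + (1 - l) *: b).
    by rewrite !scalerDr addrACA -scalerDl (addrC l) subrK scale1r.
  rewrite /gg; lra.
have gg0 : 0 <= gg 0 by rewrite /gg addr0 subrr.
have [v _ v_minorant] := vanishes_from_minorant gg n gg_convex gg0 (leqnn n).
exists v => y.
have y_x : vanishes_from n (y - x) by move=> i; rewrite leqNgt ltn_ord.
by have := v_minorant _ y_x; rewrite /gg (addrC x) subrK; lra.
Qed.

End Subgradient.

Lemma compact_lsc_min {R : realType} {X : topologicalType} (phi : X -> R) (K : set X) :
  compact K -> K !=set0 ->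
  (forall c, K c -> forall e, 0 < e -> \forall z \near c, phi c - e < phi z) ->
  exists2 y, K y & forall z, K z -> phi y <= phi z.
Proof.
(* Otherwise the strict sublevel sets B y form a proper filter on K, and any of its
   cluster points violates lower semicontinuity. *)
move=> K_compact [p Kp] phi_lsc; apply: contrapT => no_min.
have lower y : K y -> exists2 z, K z & phi z < phi y.
  move=> Ky; apply: contrapT => no_lower; apply: no_min; exists y => // z Kz.
  by rewrite leNgt; apply/negP => zy; apply: no_lower; exists z.
pose B y := [set z | K z /\ phi z < phi y].
pose F := filter_from K B.
have F_proper : ProperFilter F.
  apply: filter_from_proper => [|y Ky]; last first.
    by have [z Kz zy] := lower y Ky; exists z.
  apply: filter_from_filter; first by exists p.
  move=> y1 y2 K1 K2; wlog le12 : y1 y2 K1 K2 / phi y1 <= phi y2.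
    move=> le_wlog; have [le12|/ltW le21] := leP (phi y1) (phi y2).
      exact: le_wlog.
    by have [y K_y By] := le_wlog y2 y1 K2 K1 le21; exists y => // z /By[].
  exists y1 => // z [Kz zy1]; do 2!split => //; exact: lt_le_trans le12.
have FK : F K by exists p => // z [].
have [c [Kc c_cluster]] := K_compact F F_proper FK.
have [z0 Kz0 z0c] := lower c Kc.
have FB : F (B z0) by exists z0.
have gap : 0 < phi c - phi z0 by rewrite subr_gt0.
have [z [[_ zz0] z0z]] := c_cluster _ _ FB (phi_lsc c Kc _ gap).
move: z0z; rewrite opprB addrC subrK => z0z.
by have := lt_trans zz0 z0z; rewrite ltxx.
Qed.

Section ConvexMin.
Context {R : realType} {n : nat}.

Lemma convex_lsc (phi : 'rV[R]_n -> R) (c : 'rV[R]_n) e : convex_fun phi -> 0 < e ->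
  \forall z \near c, phi c - e < phi z.
Proof.
move=> phi_convex e0; have [w w_sub] := subdiff_neq0 phi c phi_convex.
pose M := \sum_i `|w 0 i|.
have M0 : 0 <= M by apply: sumr_ge0.
have del0 : 0 < e / (M + 1) by rewrite divr_gt0 // ltr_wpDl.
apply: filterS (nbhsx_ballx c _ del0) => z /= c_z.
have z_c i : `|(z - c) 0 i| <= e / (M + 1).
  by case: c_z => _ /(_ 0 i); rewrite /ball /= !mxE distrC => /ltW.
have := norm_dotp_le w (z - c) _ z_c; rewrite -/M ler_norml => /andP[wz _].
have : M * (e / (M + 1)) < e.
  by rewrite mulrA ltr_pdivrMr ?ltr_wpDl // mulrDr mulr1 mulrC ltrDl.
have := w_sub z; lra.
Qed.

Lemma convex_coercive_min (phi : 'rV[R]_n -> R) (p : 'rV[R]_n) rho :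
  convex_fun phi -> 0 < rho ->
  (forall z : 'rV[R]_n, (exists i, rho < `|z 0 i - p 0 i|) -> phi p <= phi z) ->
  exists y, forall z, phi y <= phi z.
Proof.
move=> phi_convex rho0 phi_coercive.
pose K := [set z : 'rV[R]_n | forall i, `[p 0 i - rho, p 0 i + rho]%classic (z 0 i)].
have K_compact : compact K.
  apply: (@rV_compact _ _ (fun i => `[p 0 i - rho, p 0 i + rho]%classic)) => i.
  exact: segment_compact.
have Kp : K p by move=> i /=; rewrite in_itv /= gerBl lerDl ltW.
have [y Ky y_min] := compact_lsc_min phi K K_compact (ex_intro _ p Kp)
  (fun c _ e e0 => convex_lsc phi c e phi_convex e0).
exists y => z; have [Kz|nKz] := pselect (K z); first exact: y_min.
apply: le_trans (y_min p Kp) (phi_coercive z _).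
move/existsNP: nKz => [i]; rewrite /= in_itv /= -ler_distl => /negP.
by rewrite -ltNge; exists i.
Qed.
End ConvexMin.

Lemma le0_of_le_mul_small {R : realType} (a c : R) :
  (forall t, 0 < t -> t <= 1 -> a <= t * c) -> a <= 0.
Proof.
move=> a_small; rewrite leNgt; apply/negP => a0.
have c0 : 0 <= c by have := a_small 1 ltr01 (lexx 1); rewrite mul1r => /(lt_le_trans a0)/ltW.
have ca0 : 0 < c + a by rewrite ltr_wpDl.
have t0 : 0 < a / (c + a) by rewrite divr_gt0.
have t1 : a / (c + a) <= 1 by rewrite ler_pdivrMr // mul1r lerDr.
have := a_small _ t0 t1; rewrite mulrAC ler_pdivlMr //; nra.
Qed.

Section Prox.
Context {R : realType} {n : nat}.
Variables (h : 'rV[R]_n -> R) (p : 'rV[R]_n) (lam : R).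
Hypotheses (h_convex : convex_fun h) (lam_gt0 : 0 < lam).

Local Notation prox_obj z := (h z + dotp (z - p) (z - p) / (2 * lam)).

Lemma sqr_dist_convex : convex_fun (fun z => dotp (z - p) (z - p)).
Proof.
move=> x y l l0 l1.
have -> : l *: x + (1 - l) *: y - p = (y - p) + l *: (x - y).
  by apply/rowP => i; rewrite !mxE; ring.
have -> : x - p = (y - p) + 1 *: (x - y).
  by apply/rowP => i; rewrite !mxE; ring.
rewrite !dotp_expand.
have := dotpp_ge0 (x - y); have : 0 <= l * (1 - l) by rewrite mulr_ge0 // subr_ge0.
nra.
Qed.

Lemma prox_obj_convex : convex_fun (fun z => prox_obj z).
Proof.
move=> x y l l0 l1; have k0 : 0 <= (2 * lam)^-1 by rewrite invr_ge0 mulr_ge0 // ltW.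
have := h_convex x y l l0 l1; have := sqr_dist_convex x y l l0 l1.
move=> /(ler_wpM2r k0); nra.
Qed.

Lemma prox_obj_min_subdiff y : (forall z, prox_obj y <= prox_obj z) ->
  subdiff h y (lam^-1 *: (p - y)).
Proof.
move=> y_min z; pose k := (2 * lam)^-1.
pose C := dotp (y - p) (z - y); pose D := dotp (z - y) (z - y).
have step t : 0 < t -> t <= 1 -> h y - h z - 2 * k * C <= t * (k * D).
  move=> t0 t1; have := y_min (t *: z + (1 - t) *: y).
  have -> : t *: z + (1 - t) *: y - p = (y - p) + t *: (z - y).
    by apply/rowP => i; rewrite !mxE; ring.
  rewrite dotp_expand -/C -/D -/k.
  have := h_convex z y t (ltW t0) t1.
  move: (dotp (y - p) (y - p)) => Q hzt hyt.
  have : t * (h y - h z - 2 * k * C - t * (k * D)) <= 0 by nra.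
  by rewrite pmulr_rle0 // subr_le0.
have := le0_of_le_mul_small _ _ step.
have -> : lam^-1 = 2 * k by rewrite /k invfM mulrA mulfV ?mul1r ?pnatr_eq0.
by rewrite dotpZl -(opprB y p) dotpNl -/C; lra.
Qed.

Lemma prox_exists : (forall z, 0 <= h z) ->
  exists y, forall z, prox_obj y <= prox_obj z.
Proof.
(* Outside the box of radius rho about p the quadratic term alone exceeds h p. *)
move=> h_ge0; pose rho := 2 * lam * h p + 1.
have rho1 : 1 <= rho by rewrite lerDr mulr_ge0 // mulr_ge0 // ltW.
apply: (convex_coercive_min _ p rho prox_obj_convex); first exact: lt_le_trans ltr01 rho1.
move=> z [i rho_i]; rewrite subrr dotp0r mul0r addr0.
have : rho ^+ 2 <= dotp (z - p) (z - p).
  apply: le_trans (dotpp_ge_coord _ i); rewrite !mxE -[(_ - _) ^+ 2]real_normK ?num_real //.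
  by rewrite ler_pXn2r ?nnegrE ?(le_trans ler01 rho1) // ltW.
move=> rho_le; have : h p <= dotp (z - p) (z - p) / (2 * lam).
  rewrite ler_pdivlMr ?mulr_gt0 // mulrC; apply: le_trans rho_le.
  have : 2 * lam * h p <= rho - 1 by rewrite addrK.
  nra.
have := h_ge0 z; lra.
Qed.

Lemma prox_point : (forall z, 0 <= h z) -> exists y,
  h y + dotp (y - p) (y - p) / (2 * lam) <= h p /\ subdiff h y (lam^-1 *: (p - y)).
Proof.
move=> h_ge0; have [y y_min] := prox_exists h_ge0.
exists y; split; last exact: prox_obj_min_subdiff.
by have := y_min p; rewrite subrr dotp0r mul0r addr0.
Qed.

End Prox.

Section Descent.
Context {R : realType} {n : nat}.

Lemma subdiff_dist_lb (h : 'rV[R]_n -> R) y v S : subdiff h y v -> v != 0 ->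
  S !=set0 -> (forall s, S s -> h s <= 0) -> h y / enorm v <= dist_set y S.
Proof.
move=> v_sub v0 S0 hS; have v_gt0 : 0 < enorm v by rewrite enorm_gt0.
apply: dist_set_glb => // s Ss; rewrite ler_pdivrMr // mulrC.
have := v_sub s; have := hS s Ss; have := cauchy_schwarz v (y - s).
by rewrite -(opprB y s) dotpNr; lra.
Qed.

Variables (h : 'rV[R]_n -> R).
Hypotheses (h_convex : convex_fun h) (h_ge0 : forall z, 0 <= h z).
Local Notation sublevel0 := [set z | h z <= 0].
Local Notation d x := (dist_set x sublevel0).
Hypothesis sublevel0_neq0 : sublevel0 !=set0.

Lemma prox_descent x : 0 < d x -> exists y v,
  [/\ 0 < h y <= h x, enorm (x - y) <= d x, subdiff h y v, v != 0
    & enorm v * d x <= 4 * h x].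
Proof.
move=> d_gt0.
have hx_gt0 : 0 < h x.
  rewrite ltNge; apply/negP => hx0; move: d_gt0.
  by rewrite ltNge (le_trans (dist_set_le x sublevel0 x hx0)) // subrr enorm0.
(* This lam keeps |x - y|^2 <= 2 lam h x = (d x)^2 / 2, so y stays off the zero set,
   while |v| d x <= (d x)^2 / lam = 4 h x. *)
pose lam := d x ^+ 2 / (4 * h x).
have lam_gt0 : 0 < lam by rewrite divr_gt0 ?exprn_gt0 ?mulr_gt0.
have lam2_gt0 : 0 < 2 * lam by rewrite mulr_gt0.
have [y [y_prox v_sub]] := prox_point h x lam h_convex lam_gt0 h_ge0.
have hy0 := h_ge0 y.
have xy_sqr_le : enorm (x - y) ^+ 2 <= d x ^+ 2 / 2.
  have -> : d x ^+ 2 / 2 = h x * (2 * lam) by rewrite /lam; field; rewrite gt_eqF.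
  by rewrite enormB enorm_sqr -(ler_pdivrMr _ _ lam2_gt0); lra.
have xy_le : enorm (x - y) <= d x.
  by rewrite -(ler_pXn2r (_ : 0 < 2)%N) ?nnegrE ?enorm_ge0 ?ltW //; nra.
have hy_gt0 : 0 < h y.
  rewrite ltNge; apply/negP => hy_le0; have := dist_set_le x sublevel0 y hy_le0.
  have := enorm_ge0 (x - y); nra.
exists y, (lam^-1 *: (x - y)); split => //.
- rewrite hy_gt0 /=; have : 0 <= dotp (y - x) (y - x) / (2 * lam).
    by rewrite divr_ge0 ?dotpp_ge0 // ltW.
  lra.
- apply: contraPneq sublevel0_neq0 => v0 [s /= hs0]; have := v_sub s.
  by rewrite v0 dotp0l addr0; lra.
- rewrite enormZ gtr0_norm ?invr_gt0 //.
  have -> : 4 * h x = lam^-1 * d x * d x.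
    by rewrite /lam; field; rewrite !gt_eqF.
  by rewrite ler_pM2r // ler_pM2l ?invr_gt0.
Qed.

End Descent.

Lemma bounded_on_compact {R : realType} {X : topologicalType} (A : set X) (u : X -> R) :
  {within A, continuous u} -> compact A -> exists M, forall s, A s -> `|u s| <= M.
Proof.
move=> u_cont A_compact.
have [M [_ HM]] := compact_bounded (continuous_compact u_cont A_compact).
by exists (M + 1) => s As; apply: (HM (M + 1)); [rewrite ltrDl | exists s].
Qed.

Lemma supnorm_ge {R : realType} {X : Type} (A : set X) (u : X -> R) t :
  (exists M, forall s, A s -> `|u s| <= M) -> A t -> `|u t| <= supnorm A u.
Proof.
by move=> [M uM] At; apply: ub_le_sup; [exists M => _ [s As <-]; exact: uM | exists t].
Qed.

Section Fbar.
Context {R : realType} {n : nat} {Z : pseudoMetricType R} (T : set Z)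
  (f : 'rV[R]_n -> R) (g : Z -> 'rV[R]_n -> R)
  (cbar : 'rV[R]_n) (bbar : Z -> R) (xbar : 'rV[R]_n).
Hypotheses (T_compact : compact T) (f_convex : convex_fun f)
  (g_convex : forall t, T t -> convex_fun (g t))
  (g_cont : {within [set p : Z * 'rV[R]_n | T p.1], continuous (fun p => g p.1 p.2)})
  (bbar_cont : {within T, continuous bbar})
  (xbar_opt : optset T f g cbar bbar xbar).
Local Notation h := (fbar T f g cbar xbar bbar).
Local Notation F x := (f x - f xbar + dotp cbar (x - xbar)).
Local Notation abar := (f xbar + dotp cbar xbar).

Lemma constr_ub x : exists M, forall t, T t -> g t x - bbar t <= M.
Proof.
have [M1 gM1] := bounded_on_compact _ (fun p => g p.1 p.2)
  (continuous_subspaceW (fun p (Tp : (T `*` [set x]) p) => Tp.1) g_cont)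
  (compact_setX T_compact (@compact_set1 _ x)).
have [M2 bM2] := bounded_on_compact _ _ bbar_cont T_compact.
exists (M1 + M2) => t Tt.
have := ler_normlW (gM1 (t, x) (conj Tt erefl)); have := bM2 t Tt.
rewrite ler_norml => /andP[? _] /=; lra.
Qed.

Lemma fbar_has_sup x : has_sup ([set F x] `|` [set g t x - bbar t | t in T]).
Proof.
split; first by exists (F x); left.
have [M gM] := constr_ub x.
by exists (Num.max (F x) M) => r [->|[t Tt <-]]; rewrite le_max ?lexx ?gM ?orbT.
Qed.

Lemma fbar_ge_obj x : F x <= h x.
Proof. by apply: (ub_le_sup (fbar_has_sup x).2); left. Qed.

Lemma fbar_ge_constr x t : T t -> g t x - bbar t <= h x.
Proof. by move=> Tt; apply: (ub_le_sup (fbar_has_sup x).2); right; exists t. Qed.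

Lemma fbar_le x a : F x <= a -> (forall t, T t -> g t x - bbar t <= a) -> h x <= a.
Proof.
move=> Fa ga; apply: ge_sup; first by exists (F x); left.
by move=> r [->|[t Tt <-]] //; exact: ga.
Qed.

Lemma convex_fbar : convex_fun h.
Proof.
move=> x y l l0 l1; have l1' : 0 <= 1 - l by rewrite subr_ge0.
apply: fbar_le => [|t Tt].
  have -> : l *: x + (1 - l) *: y - xbar = l *: (x - xbar) + (1 - l) *: (y - xbar).
    by apply/rowP => i; rewrite !mxE; ring.
  have := f_convex x y l l0 l1; rewrite dotpDr !dotpZr.
  have := ler_wpM2l l0 (fbar_ge_obj x); have := ler_wpM2l l1' (fbar_ge_obj y).
  lra.
have := g_convex t Tt x y l l0 l1.
have := ler_wpM2l l0 (fbar_ge_constr x t Tt); have := ler_wpM2l l1' (fbar_ge_constr y t Tt).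
lra.
Qed.

Lemma fbar_ge0 z : 0 <= h z.
Proof.
have [[t [Tt gt0]]|no_viol] := pselect (exists t, T t /\ 0 < g t z - bbar t).
  exact: le_trans (ltW gt0) (fbar_ge_constr z t Tt).
have z_feas : feasible T g bbar z.
  move=> t Tt; rewrite -subr_le0 leNgt; apply/negP => gt0; apply: no_viol.
  by exists t.
by have := xbar_opt.2 z z_feas; have := fbar_ge_obj z; rewrite dotpBr; lra.
Qed.

Lemma levelsetE : levelset T f g cbar abar bbar = [set x | h x <= 0].
Proof.
apply/funext => x; apply/propext; split => [[Fx gx]|/= hx0].
  apply: fbar_le => [|t Tt]; first by rewrite dotpBr; lra.
  by rewrite subr_le0; exact: gx.
split; first by have := fbar_ge_obj x; rewrite dotpBr; lra.
by move=> t Tt; have := fbar_ge_constr x t Tt; lra.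
Qed.

Lemma optset_fbar_le0 s : optset T f g cbar bbar s -> h s <= 0.
Proof.
move=> [s_feas s_min]; have : levelset T f g cbar abar bbar s.
  by split => //; exact: s_min xbar xbar_opt.1.
by rewrite levelsetE.
Qed.

Lemma fbar_le_perturbation alpha b x : {within T, continuous b} ->
  levelset T f g cbar alpha b x ->
  h x <= Num.max `|alpha - abar| (supnorm T (b \- bbar)).
Proof.
move=> b_cont [Fx gx].
have b_bnd : exists M, forall t, T t -> `|(b \- bbar) t| <= M.
  have [Mb bMb] := bounded_on_compact _ _ b_cont T_compact.
  have [Mbb bMbb] := bounded_on_compact _ _ bbar_cont T_compact.
  exists (Mb + Mbb) => t Tt; apply: le_trans (ler_normB _ _) _.
  by apply: lerD; [exact: bMb | exact: bMbb].
apply: fbar_le => [|t Tt]; rewrite le_max; apply/orP; [left|right].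
  by apply: le_trans (ler_norm _); rewrite dotpBr; lra.
apply: le_trans (supnorm_ge _ _ _ b_bnd Tt); apply: le_trans (ler_norm _).
by have := gx t Tt => /=; lra.
Qed.

Variable q : R.
Hypotheses (q_le1 : q <= 1) (not_calm : ~ L_qcalm T f g cbar q abar bbar xbar).

Lemma noncalm_point eps a : 0 < eps -> eps <= 1 -> 0 < a -> exists x,
  [/\ enorm (x - xbar) < eps, h x < a, h x < eps
    & h x < eps * dist_set x [set z | h z <= 0]].
Proof.
move=> eps0 eps1 a0; apply: contrapT => no_point; apply: not_calm.
exists eps; split => //; exists eps; split => //.
exists (Num.min a eps); split; first by rewrite lt_min a0.
move=> alpha b b_cont; set dl := Num.max _ _ => dl_lt x x_lev x_near.
rewrite levelsetE leNgt; apply/negP => dist_lt; apply: no_point; exists x.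
move: dl_lt; rewrite lt_min => /andP[dl_a dl_eps].
have hx_dl := fbar_le_perturbation alpha b x b_cont x_lev.
have dl_pow : dl <= dl `^ q.
  have [->|dl_neq0] := eqVneq dl 0; first exact: powR_ge0.
  apply: ger1_powR => //; rewrite lt_neqAle eq_sym dl_neq0 le_max normr_ge0 /=.
  exact: ltW (lt_le_trans dl_eps eps1).
split => //; [exact: le_lt_trans hx_dl dl_a | exact: le_lt_trans hx_dl dl_eps |].
exact: le_lt_trans hx_dl (le_lt_trans dl_pow dist_lt).
Qed.

Definition small_slope_point (eps a : R) (y v : 'rV[R]_n) :=
  [/\ 0 < h y < a, h y < eps, enorm (y - xbar) <= 2 * eps, enorm v <= 4 * eps
    & subdiff h y v /\ v != 0].

Lemma small_slope_point_exists eps a : 0 < eps -> eps <= 1 -> 0 < a ->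
  exists y v, small_slope_point eps a y v.
Proof.
move=> eps0 eps1 a0.
have [x [x_near hx_a hx_eps hx_dist]] := noncalm_point eps a eps0 eps1 a0.
set d := dist_set x _ in hx_dist.
have xbar_in : [set z | h z <= 0] xbar by exact: optset_fbar_le0.
have d_le : d <= enorm (x - xbar) := dist_set_le x _ _ xbar_in.
have d_gt0 : 0 < d.
  by rewrite -(pmulr_rgt0 _ eps0); exact: le_lt_trans (fbar_ge0 x) hx_dist.
have [y [v [/andP[hy0 hyx] xy_d v_sub v0 vd]]] :=
  prox_descent h convex_fbar fbar_ge0 (ex_intro _ xbar xbar_in) x d_gt0.
exists y, v; split => //.
- by rewrite hy0 (le_lt_trans hyx).
- exact: le_lt_trans hyx hx_eps.
- have -> : y - xbar = (y - x) + (x - xbar) by rewrite addrA subrK.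
  apply: le_trans (ler_enormD _ _) _; rewrite enormB; lra.
- rewrite -(ler_pM2r d_gt0); apply: le_trans vd _; nra.
Qed.

End Fbar.

Lemma cvg0_le_harmonic {R : realType} (u : nat -> R) (C : R) :
  (forall k, 0 <= u k <= C / k.+1%:R) -> u k @[k --> \oo] --> 0.
Proof.
move=> u_le; apply: (@squeeze_cvgr _ _ _ _ (cst 0) (C *: @harmonic R)).
- by apply: nearW => k; exact: u_le.
- exact: cvg_cst.
- by rewrite -(scaler0 _ C); exact: (cvgZl_tmp cvg_harmonic).
Qed.

Lemma recursive_choice {R : realType} {A : Type} (m : A -> R) (P : nat -> R -> A -> Prop) :
  (forall k a, 0 < a -> exists2 y, P k a y & 0 < m y) ->
  exists u : nat -> A, P 0%N 1 (u 0%N) /\ forall k, P k.+1 (m (u k)) (u k.+1).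
Proof.
move=> P_ex.
have [ch ch_spec] : {ch : nat * R -> A &
    forall ka, 0 < ka.2 -> P ka.1 ka.2 (ch ka) /\ 0 < m (ch ka)}.
  apply: (@choice _ _ (fun ka y => 0 < ka.2 -> P ka.1 ka.2 y /\ 0 < m y)) => -[k a].
  have [y Py my] := P_ex k 1 ltr01.
  have [a0|a_le0] := ltP 0 a; last by exists y.
  by have [y' Py' my'] := P_ex k a a0; exists y'.
pose u := fix u k := if k is k'.+1 then ch (k, m (u k')) else ch (0%N, 1).
have u_spec k : P k (if k is k'.+1 then m (u k') else 1) (u k) /\ 0 < m (u k).
  elim: k => [|k [_ IH]]; first exact: ch_spec (0%N, 1) ltr01.
  exact: ch_spec (k.+1, _) IH.
by exists u; split => [|k]; [exact: (u_spec 0%N).1 | exact: (u_spec k.+1).1].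
Qed.

Theorem proposition4p4 (R : realType) (n : nat) (Z : pseudoMetricType R)
  (T : set Z) (f : 'rV[R]_n -> R) (g : Z -> 'rV[R]_n -> R) (q : R)
  (cbar : 'rV[R]_n) (bbar : Z -> R) (xbar : 'rV[R]_n) :
  hausdorff_space Z -> compact T -> T != setT ->
  convex_fun f -> (forall t, T t -> convex_fun (g t)) ->
  {within [set p : Z * 'rV[R]_n | T p.1], continuous (fun p => g p.1 p.2)} ->
  0 < q -> q <= 1 ->
  {within T, continuous bbar} ->
  optset T f g cbar bbar xbar ->
  ~ L_qcalm T f g cbar q (f xbar + dotp cbar xbar) bbar xbar ->
  exists (x v : nat -> 'rV[R]_n),
    enorm (x k - xbar) @[k --> \oo] --> 0 /\
    (forall k, 0 < fbar T f g cbar xbar bbar (x k)) /\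
    (forall k, fbar T f g cbar xbar bbar (x k.+1) < fbar T f g cbar xbar bbar (x k)) /\
    fbar T f g cbar xbar bbar (x k) @[k --> \oo] --> 0 /\
    (forall k, subdiff (fbar T f g cbar xbar bbar) (x k) (v k) /\ v k != 0) /\
    enorm (v k) @[k --> \oo] --> 0 /\
    (forall k, dist_set (x k) (optset T f g cbar bbar)
                 >= fbar T f g cbar xbar bbar (x k) / enorm (v k)).
Proof.
move=> _ T_compact _ f_convex g_convex g_cont _ q_le1 bbar_cont xbar_opt not_calm.
pose h := fbar T f g cbar xbar bbar.
pose P k a (yv : 'rV[R]_n * 'rV[R]_n) :=
  small_slope_point T f g cbar bbar xbar k.+1%:R^-1 a yv.1 yv.2.
have [|u [u0 uS]] := recursive_choice (fun yv => h yv.1) P.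
  move=> k a a0.
  have eps0 : 0 < k.+1%:R^-1 :> R by rewrite invr_gt0.
  have eps1 : k.+1%:R^-1 <= 1 :> R by rewrite invf_le1 ?ler1n.
  have [y [v Pyv]] := small_slope_point_exists T f g cbar bbar xbar T_compact
    f_convex g_convex g_cont bbar_cont xbar_opt q q_le1 not_calm _ _ eps0 eps1 a0.
  by exists (y, v) => //; case: Pyv => /andP[].
have uP k : exists a, P k a (u k) by case: k => [|k]; eexists; [exact: u0 | exact: uS].
exists (fun k => (u k).1), (fun k => (u k).2).
split; [|split; [|split; [|split; [|split; [|split]]]]].
- apply: (@cvg0_le_harmonic _ _ 2) => k; have [a [_ _ ? _ _]] := uP k.
  by rewrite enorm_ge0.
- by move=> k; have [a [/andP[] ]] := uP k.
- by move=> k; have [/andP[_ ]] := uS k.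
- apply: (@cvg0_le_harmonic _ _ 1) => k; have [a [/andP[hk _] hk1 _ _ _]] := uP k.
  by rewrite ltW //= mul1r ltW.
- by move=> k; have [a [_ _ _ _]] := uP k.
- apply: (@cvg0_le_harmonic _ _ 4) => k; have [a [_ _ _ ? _]] := uP k.
  by rewrite enorm_ge0.
- move=> k; have [a [_ _ _ _ [v_sub v0]]] := uP k.
  apply: subdiff_dist_lb v_sub v0 (ex_intro _ xbar xbar_opt) _ => s.
  exact: optset_fbar_le0 T_compact g_cont bbar_cont xbar_opt s.
Qed.
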